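(* Let $|\psi\rangle,|\phi\rangle\in\mathcal{H}'$ be pure states, with $p_b=|\langle b|\psi\rangle|^2$ and $q_b=|\langle b|\phi\rangle|^2$ for $b\in\{0,1\}$. There exists a deterministic (trace-preserving) Z$_2$-invariant operation $\mathcal{E}$ with $\mathcal{E}(|\psi\rangle\langle\psi|)=|\phi\rangle\langle\phi|$ if and only if $\mathcal{C}(|\psi\rangle)\ge\mathcal{C}(|\phi\rangle)$, where $\mathcal{C}(|\psi\rangle)=2\min\{p_0,p_1\}$ and $\mathcal{C}(|\phi\rangle)=2\min\{q_0,q_1\}$.
   Context: $\mathcal{H}'$ is a two-dimensional Hilbert space with orthonormal basis $|0\rangle,|1\rangle$; the parity operator is $\pi=|0\rangle\langle0|-|1\rangle\langle1|$, and Z$_2$ acts by $\{I,\pi\}$. A Z$_2$-invariant operation is a completely positive, trace-nonincreasing linear map $\mathcal{E}$ on operators on $\mathcal{H}'$ with $\mathcal{E}(\pi X\pi)=\pi\mathcal{E}(X)\pi$ for all $X$; it is deterministic if trace-preserving. *)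

(* Complex numbers: an arbitrary numClosedFieldType C
   (algebraically closed field with conjugation and partial order, e.g. the complex numbers). *)
From mathcomp Require Import all_boot all_order all_algebra.
Set Implicit Arguments. Unset Strict Implicit. Unset Printing Implicit Defensive.
Import Order.TTheory GRing.Theory Num.Theory.
Local Open Scope ring_scope.

Section QDefs.
Variable C : numClosedFieldType.

Definition dagger m n (A : 'M[C]_(m, n)) : 'M[C]_(n, m) := map_mx Num.conj A^T.

Definition psd m (A : 'M[C]_m) : Prop :=
  dagger A = A /\ forall v : 'cV[C]_m, 0 <= (dagger v *m A *m v) 0 0.

(* positive semidefiniteness of an element of M_n (x) M_2, written as an n x n array of 2x2 blocks *)
Definition block_psd n (X : 'I_n -> 'I_n -> 'M[C]_2) : Prop :=
  (forall i j, X j i = dagger (X i j)) /\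
  forall v : 'I_n -> 'cV[C]_2,
    0 <= \sum_(i < n) \sum_(j < n) (dagger (v i) *m X i j *m v j) 0 0.

Definition linear_map (E : 'M[C]_2 -> 'M[C]_2) : Prop :=
  forall (a : C) (X Y : 'M[C]_2), E (a *: X + Y) = a *: E X + E Y.

(* complete positivity: id_n (x) E is positive for every n *)
Definition completely_positive (E : 'M[C]_2 -> 'M[C]_2) : Prop :=
  forall n (X : 'I_n -> 'I_n -> 'M[C]_2), block_psd X -> block_psd (fun i j => E (X i j)).

Definition trace_nonincreasing (E : 'M[C]_2 -> 'M[C]_2) : Prop :=
  forall rho : 'M[C]_2, psd rho -> \tr (E rho) <= \tr rho.

Definition trace_preserving (E : 'M[C]_2 -> 'M[C]_2) : Prop :=
  forall X : 'M[C]_2, \tr (E X) = \tr X.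

Definition parity : 'M[C]_2 := \matrix_(i < 2, j < 2) (if i == j then (if i == 0 then 1 else -1) else 0).

Definition Z2_invariant (E : 'M[C]_2 -> 'M[C]_2) : Prop :=
  forall X : 'M[C]_2, E (parity *m X *m parity) = parity *m E X *m parity.

Definition Z2_operation (E : 'M[C]_2 -> 'M[C]_2) : Prop :=
  [/\ linear_map E, completely_positive E, trace_nonincreasing E & Z2_invariant E].

Definition deterministic_Z2_operation (E : 'M[C]_2 -> 'M[C]_2) : Prop :=
  Z2_operation E /\ trace_preserving E.

Definition unit_vector (psi : 'cV[C]_2) : Prop :=
  \sum_(b < 2) `|psi b 0| ^+ 2 = 1.

Definition proj (psi : 'cV[C]_2) : 'M[C]_2 := psi *m dagger psi.

Definition pop (psi : 'cV[C]_2) (b : 'I_2) : C := `|psi b 0| ^+ 2.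

Definition coh (psi : 'cV[C]_2) : C := 2 * Num.min (pop psi 0) (pop psi 1).

End QDefs.

(* A Z2-invariant operation E maps |i><i| to diagonal and |0><1|, |1><0| to
   anti-diagonal matrices, so on the coherence of a hermitian input it acts as
   X01 |-> c X01 + d X01^*.  Complete positivity and trace preservation force
   |c X01 + d X01^*| <= |X01|.  For pure states this says that p0 p1 cannot increase,
   which, as p0 + p1 = 1, is the same as min {p0, p1} not increasing.
   Conversely, if q0 q1 <= p0 p1 then p0 lies between q0 and q1, say
   p0 = t q0 + (1 - t) q1, and the Kraus operators sqrt t * diag (phi_b / psi_b)
   and sqrt (1 - t) * antidiag (phi_b / psi_(1-b)), of even and odd parity, both
   send psi to multiples of phi.  When phi is incoherent the replacement channel
   X |-> tr X |phi><phi| does the job. *)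

From HB Require Import structures.
From mathcomp Require Import all_boot all_order all_algebra ring.
Set Implicit Arguments.
Unset Strict Implicit.
Unset Printing Implicit Defensive.
Import Order.TTheory GRing.Theory Num.Theory.
Local Open Scope ring_scope.

Lemma big_ord2 (R : nmodType) (F : 'I_2 -> R) : \sum_(i < 2) F i = F 0 + F 1.
Proof. by rewrite big_ord_recl big_ord1; congr (F _ + F _); apply/val_inj. Qed.

Lemma ord2P (i : 'I_2) : i = 0 \/ i = 1.
Proof. by case: i => [[|[|//]]] ?; [left|right]; apply/val_inj. Qed.

Ltac mx2_entries :=
  apply/matrixP; let i := fresh "i" in let j := fresh "j" in move=> i j;
  try rewrite (ord1 j);
  rewrite !mxE ?big_ord2 ?big_ord1 ?mxE ?big_ord2 ?big_ord1 ?mxE;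
  case: (ord2P i) => ->; try case: (ord2P j) => ->; rewrite /= ?mxE.

Section Adjoint.
Variable C : numClosedFieldType.

Lemma daggerM m n p (A : 'M[C]_(m, n)) (B : 'M[C]_(n, p)) :
  dagger (A *m B) = dagger B *m dagger A.
Proof. by rewrite /dagger trmx_mul map_mxM. Qed.

Lemma daggerK m n (A : 'M[C]_(m, n)) : dagger (dagger A) = A.
Proof. by apply/matrixP => i j; rewrite !mxE conjCK. Qed.

Lemma daggerZ m n (a : C) (A : 'M[C]_(m, n)) : dagger (a *: A) = a^* *: dagger A.
Proof. by apply/matrixP => i j; rewrite !mxE rmorphM. Qed.

Lemma dagger_sum m n (I : finType) (F : I -> 'M[C]_(m, n)) :
  dagger (\sum_i F i) = \sum_i dagger (F i).
Proof. by rewrite /dagger raddf_sum map_mx_sum. Qed.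

End Adjoint.

Section Parity.
Variable C : numClosedFieldType.
Local Notation pi := (parity C).

Lemma parityK : pi *m pi = 1%:M.
Proof. by mx2_entries; ring. Qed.

Lemma dagger_parity : dagger pi = pi.
Proof. by mx2_entries; rewrite ?rmorphN1 ?conjC0 ?conjC1. Qed.

Lemma parity_conj_entry (M : 'M[C]_2) i j :
  (pi *m M *m pi) i j = (-1) ^+ (i != j) * M i j.
Proof.
rewrite !mxE !big_ord2 !mxE !big_ord2 !mxE.
by case: (ord2P i) => ->; case: (ord2P j) => -> /=; ring.
Qed.

Lemma parity_conjM (A B : 'M[C]_2) :
  pi *m (A *m B) *m pi = (pi *m A *m pi) *m (pi *m B *m pi).
Proof. by rewrite !mulmxA -[pi *m A *m pi *m pi]mulmxA parityK mulmx1. Qed.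

Lemma parity_sign_entry (M : 'M[C]_2) (b : bool) i j :
  pi *m M *m pi = (-1) ^+ b *: M -> (i != j) != b -> M i j = 0.
Proof.
move=> /matrixP/(_ i j); rewrite parity_conj_entry mxE.
case: (i != j); case: b => //= Mij _; apply/eqP; rewrite -eqNr.
- by rewrite -mulN1r Mij mul1r.
- by rewrite -mulN1r -Mij mul1r.
Qed.

End Parity.

Section Kraus.
Variables (C : numClosedFieldType) (I : finType) (K : I -> 'M[C]_2).
Local Notation pi := (parity C).

Definition kraus (X : 'M[C]_2) : 'M[C]_2 := \sum_k K k *m X *m dagger (K k).

Lemma kraus_linear : linear_map kraus.
Proof.
move=> a X Y; rewrite /kraus scaler_sumr -big_split; apply: eq_bigr => k _.
by rewrite mulmxDr mulmxDl -scalemxAr -scalemxAl.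
Qed.

Lemma kraus_cp : completely_positive kraus.
Proof.
move=> n X [X_herm X_pos]; split=> [i j|v].
  rewrite X_herm /kraus dagger_sum; apply: eq_bigr => k _.
  by rewrite !daggerM daggerK mulmxA.
have -> : \sum_i \sum_j (dagger (v i) *m kraus (X i j) *m v j) 0 0 =
    \sum_k \sum_i \sum_j (dagger (dagger (K k) *m v i) *m X i j *m (dagger (K k) *m v j)) 0 0.
  rewrite [RHS]exchange_big; apply: eq_bigr => i _.
  rewrite [RHS]exchange_big; apply: eq_bigr => j _.
  rewrite /kraus mulmx_sumr mulmx_suml summxE; apply: eq_bigr => k _.
  by rewrite daggerM daggerK !mulmxA.
by apply: sumr_ge0 => k _; apply: X_pos.
Qed.

Lemma kraus_tp : \sum_k dagger (K k) *m K k = 1%:M -> trace_preserving kraus.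
Proof.
move=> K_complete X; rewrite /kraus linear_sum /=.
under eq_bigr do rewrite mxtrace_mulC mulmxA.
by rewrite -linear_sum -mulmx_suml K_complete mul1mx.
Qed.

Lemma kraus_Z2_invariant :
  (forall k, exists b : bool, pi *m K k *m pi = (-1) ^+ b *: K k) -> Z2_invariant kraus.
Proof.
move=> K_sign X; rewrite /kraus mulmx_sumr mulmx_suml; apply: eq_bigr => k _.
have [b Kb] := K_sign k.
have Kb' : pi *m dagger (K k) *m pi = (-1) ^+ b *: dagger (K k).
  by have := congr1 (@dagger C 2 2) Kb; rewrite !daggerM dagger_parity daggerZ rmorph_sign mulmxA.
rewrite !parity_conjM Kb Kb' -scalemxAl -scalemxAr -scalemxAl scalerA.
by rewrite -expr2 sqrr_sign scale1r.
Qed.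

Lemma kraus_proj (psi phi : 'cV[C]_2) (mu : I -> C) :
  (forall k, K k *m psi = mu k *: phi) -> \sum_k mu k * (mu k)^* = 1 ->
  kraus (proj psi) = proj phi.
Proof.
move=> K_psi mu_norm; rewrite /kraus /proj -[RHS]scale1r -mu_norm scaler_suml.
apply: eq_bigr => k _; rewrite mulmxA -mulmxA -daggerM K_psi daggerZ.
by rewrite -scalemxAl -scalemxAr scalerA.
Qed.

Lemma kraus_deterministic_Z2 :
  \sum_k dagger (K k) *m K k = 1%:M ->
  (forall k, exists b : bool, pi *m K k *m pi = (-1) ^+ b *: K k) ->
  deterministic_Z2_operation kraus.
Proof.
move=> K_complete K_sign; have K_tp := kraus_tp K_complete.
split=> //; split; [exact: kraus_linear|exact: kraus_cp| |exact: kraus_Z2_invariant].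
by move=> rho _; rewrite K_tp.
Qed.

End Kraus.

Lemma delta_block_psd (C : numClosedFieldType) :
  block_psd (fun i j : 'I_2 => (delta_mx i j : 'M[C]_2)).
Proof.
split=> [i j|v].
  by apply/matrixP => k l; rewrite !mxE rmorph_nat andbC.
rewrite (_ : \sum_i _ = (v 0 0 0 + v 1 1 0) * (v 0 0 0 + v 1 1 0)^*) ?mul_conjC_ge0 //.
by rewrite !big_ord2 !mxE !big_ord2 !mxE !big_ord2 !mxE /= rmorphD; ring.
Qed.

Section Z2Channel.
Variables (C : numClosedFieldType) (E : 'M[C]_2 -> 'M[C]_2).
Hypotheses (E_linear : linear_map E) (E_cp : completely_positive E)
  (E_tp : trace_preserving E) (E_Z2 : Z2_invariant E).

HB.instance Definition _ := GRing.isLinear.Build C 'M[C]_2 'M[C]_2 *:%R E E_linear.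

Lemma Z2_delta_entry i j k l : (k != l) != (i != j) -> E (delta_mx i j) k l = 0.
Proof.
apply: parity_sign_entry; rewrite -E_Z2 -linearZ; congr E.
apply/matrixP => k' l'; rewrite parity_conj_entry !mxE.
by case: (k' =P i) => [->|_]; case: (l' =P j) => [->|_]; rewrite ?andbF ?mulr0.
Qed.

Lemma Z2_channel_offdiag X :
  E X 0 1 = X 0 1 * E (delta_mx 0 1) 0 1 + X 1 0 * E (delta_mx 1 0) 0 1.
Proof.
rewrite {1}(matrix_sum_delta X) !big_ord2 !linearD !linearZ.
by rewrite !mxE (@Z2_delta_entry 0 0) ?(@Z2_delta_entry 1 1) // !mulr0 add0r addr0.
Qed.

Lemma Z2_channel_offdiag_le X : dagger X = X -> `|E X 0 1| <= `|X 0 1|.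
Proof.
move=> X_herm; pose Y i j := E (delta_mx i j).
have [Y_herm Y_pos] : block_psd Y by apply: E_cp; apply: delta_block_psd.
have trY i : Y i i 1 1 = 1 - Y i i 0 0.
  apply: (addrI (Y i i 0 0)); rewrite [RHS]addrC subrK.
  have := E_tp (delta_mx i i); rewrite /mxtrace !big_ord2 !mxE.
  by case: (ord2P i) => -> /=; rewrite ?addr0 ?add0r.
have Y_zero i j k l : (k != l) != (i != j) -> Y i j k l = 0 by apply: Z2_delta_entry.
set g := X 0 1; set k := E X 0 1.
have k_def : k = g * Y 0 1 0 1 + g^* * (Y 0 1 1 0)^*.
  rewrite /k Z2_channel_offdiag -/(Y 0 1) -/(Y 1 0) (Y_herm 0 1) -{2}X_herm.
  by rewrite !mxE.
(* The test vector for which the Choi form is |g|^2 - |k|^2. *)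
pose v (i : 'I_2) : 'cV[C]_2 :=
  if i == 0 then \col_l (if l == 0 then k else - k^*) else \col_l (if l == 0 then g else - g).
have form : \sum_i \sum_j (dagger (v i) *m Y i j *m v j) 0 0 = g * g^* - k * k^*.
  rewrite !big_ord2 !mxE !big_ord2 !mxE !big_ord2 !mxE /=.
  rewrite (Y_herm 0 1) !mxE (Y_zero 0 0 1 0) ?(Y_zero 0 0 0 1) ?(Y_zero 0 1 0 0)
    ?(Y_zero 0 1 1 1) ?(Y_zero 1 1 1 0) ?(Y_zero 1 1 0 1) ?trY // k_def.
  rewrite !(rmorphD, rmorphM, rmorphN) /= !conjCK conjC0; ring.
by have := Y_pos v; rewrite form subr_ge0 -!normCK ler_pXn2r ?nnegrE.
Qed.

End Z2Channel.

Lemma real_minr_absE (R : numFieldType) (x y : R) :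
  x \is Num.real -> y \is Num.real -> Num.min x y = (x + y - `|x - y|) / 2.
Proof. by move=> xR yR; case: real_leP => // _; field. Qed.

Lemma real_min_le_minE (R : numFieldType) (x y u v : R) :
  x \is Num.real -> y \is Num.real -> u \is Num.real -> v \is Num.real ->
  x + y = u + v -> (Num.min u v <= Num.min x y) = (u * v <= x * y).
Proof.
move=> xR yR uR vR sum_eq.
rewrite !real_minr_absE // ler_pM2r ?invr_gt0 // sum_eq lerD2l lerN2.
rewrite -(ler_pXn2r (_ : 0 < 2)%N) ?nnegrE // !real_normK ?rpredB //.
have sqr_diff (a b : R) : (a - b) ^+ 2 = (a + b) ^+ 2 - 4 * (a * b) by ring.
by rewrite !sqr_diff sum_eq lerD2l lerN2 ler_pM2l.
Qed.

Lemma real_convex_between (R : numFieldType) (p q r : R) :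
  p \is Num.real -> q \is Num.real -> r \is Num.real -> (p - q) * (p - r) <= 0 ->
  exists2 t, 0 <= t <= 1 & t * q + (1 - t) * r = p.
Proof.
move=> pR qR rR; have [<-|q_neq_r] := eqVneq q r => between.
  exists 1; first by rewrite ler01 lexx.
  have : (p - q) ^+ 2 == 0 by rewrite eq_le {1}expr2 between -realEsqr rpredB.
  by rewrite expf_eq0 /= subr_eq0 subrr mul0r addr0 mul1r => /eqP.
have qr0 : q - r != 0 by rewrite subr_eq0.
have ge0 (a : R) : a \is Num.real -> 0 <= (a ^+ 2 - (p - q) * (p - r)) / (q - r) ^+ 2.
  by move=> aR; rewrite divr_ge0 ?subr_ge0 ?(le_trans between) -?realEsqr ?rpredB.
exists ((p - r) / (q - r)); last by field.
apply/andP; split.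
  suff -> : (p - r) / (q - r) = ((p - r) ^+ 2 - (p - q) * (p - r)) / (q - r) ^+ 2.
    by apply: ge0; rewrite rpredB.
  by field.
rewrite -subr_ge0.
suff -> : 1 - (p - r) / (q - r) = ((p - q) ^+ 2 - (p - q) * (p - r)) / (q - r) ^+ 2.
  by apply: ge0; rewrite rpredB.
by field.
Qed.

Section PureStates.
Variable C : numClosedFieldType.
Implicit Types psi phi : 'cV[C]_2.

Lemma proj_entry psi i j : proj psi i j = psi i 0 * (psi j 0)^*.
Proof. by rewrite !mxE big_ord1 !mxE. Qed.

Lemma dagger_proj psi : dagger (proj psi) = proj psi.
Proof. by rewrite /proj daggerM daggerK. Qed.

Lemma proj_offdiag_norm psi : `|proj psi 0 1| ^+ 2 = pop psi 0 * pop psi 1.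
Proof. by rewrite proj_entry normrM norm_conjC exprMn. Qed.

Lemma unit_vector_pop psi : unit_vector psi -> pop psi 0 + pop psi 1 = 1.
Proof. by rewrite /unit_vector big_ord2. Qed.

Lemma unit_vector_pop1 psi : unit_vector psi -> pop psi 1 = 1 - pop psi 0.
Proof. by move/unit_vector_pop <-; rewrite addrC addKr. Qed.

Lemma coh_leE psi phi : unit_vector psi -> unit_vector phi ->
  (coh phi <= coh psi) = (pop phi 0 * pop phi 1 <= pop psi 0 * pop psi 1).
Proof.
move=> /unit_vector_pop psi_pop /unit_vector_pop phi_pop.
rewrite /coh ler_pM2l // real_min_le_minE ?ger0_real ?exprn_ge0 //.
by rewrite psi_pop phi_pop.
Qed.

Lemma Z2_channel_pop_mul_le (E : 'M[C]_2 -> 'M[C]_2) psi phi :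
  deterministic_Z2_operation E -> E (proj psi) = proj phi ->
  pop phi 0 * pop phi 1 <= pop psi 0 * pop psi 1.
Proof.
move=> [[E_linear E_cp _ E_Z2] E_tp] E_psi.
rewrite -!proj_offdiag_norm -E_psi ler_pXn2r ?nnegrE //.
exact: Z2_channel_offdiag_le (dagger_proj psi).
Qed.

Lemma replacement_Z2_channel psi phi : unit_vector psi -> unit_vector phi ->
  phi 0 0 * phi 1 0 = 0 ->
  exists E, deterministic_Z2_operation E /\ E (proj psi) = proj phi.
Proof.
move=> psi_unit phi_unit /eqP phi_incoherent.
pose K (k : 'I_2) : 'M[C]_2 := \matrix_(i, j) (if j == k then phi i 0 else 0).
have K_complete : \sum_k dagger (K k) *m K k = 1%:M.
  move: phi_unit; rewrite /unit_vector big_ord2 !normCK => phi_norm.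
  by rewrite big_ord2; mx2_entries; rewrite conjC0 -?phi_norm; ring.
have [s phi_s] : exists s : 'I_2, forall i, i != s -> phi i 0 = 0.
  move: phi_incoherent; rewrite mulf_eq0 => /orP[] /eqP phi0;
    [exists 1|exists 0] => i; by case: (ord2P i) => ->; rewrite ?eqxx.
have K_sign k : exists b : bool, parity C *m K k *m parity C = (-1) ^+ b *: K k.
  exists (s != k); apply/matrixP => i j; rewrite parity_conj_entry !mxE.
  case: (j =P k) => [->|_]; last by rewrite !mulr0.
  by case: (i =P s) => [->|/eqP/phi_s ->]; rewrite ?mulr0.
have K_psi k : K k *m psi = psi k 0 *: phi.
  by case: (ord2P k) => ->; mx2_entries; ring.
exists (kraus K); split; first by apply: kraus_deterministic_Z2.
apply: (kraus_proj (mu := fun k => psi k 0)) => //.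
by rewrite -psi_unit; apply: eq_bigr => k _; rewrite normCK.
Qed.

Lemma coherent_Z2_channel psi phi (t : C) : unit_vector psi -> unit_vector phi ->
  psi 0 0 != 0 -> psi 1 0 != 0 -> 0 <= t <= 1 ->
  t * pop phi 0 + (1 - t) * pop phi 1 = pop psi 0 ->
  exists E, deterministic_Z2_operation E /\ E (proj psi) = proj phi.
Proof.
move=> psi_unit phi_unit psi0 psi1 /andP[t_ge0 t_le1] t_mix.
pose w (b : bool) := if b then 1 - t else t.
have w_ge0 b : 0 <= w b by case: b; rewrite /w ?subr_ge0.
pose mu b := sqrtC (w b).
have mu_norm b : `|mu b| ^+ 2 = w b by rewrite ger0_norm ?sqrtC_ge0 ?sqrtCK.
pose K (b : bool) : 'M[C]_2 :=
  \matrix_(i, j) (if (i != j) == b then mu b * phi i 0 / psi j 0 else 0).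
have K_complete : \sum_(b : bool) dagger (K b) *m K b = 1%:M.
  have entry_norm b (x y : C) :
      (mu b * x / y)^* * (mu b * x / y) = w b * `|x| ^+ 2 / `|y| ^+ 2.
    by rewrite mulrC -normCK !normrM normfV !exprMn exprVn mu_norm.
  have pop_psi_neq0 j : pop psi j != 0.
    by rewrite /pop sqrf_eq0 normr_eq0; case: (ord2P j) => ->.
  have t_mix1 : (1 - t) * pop phi 0 + t * pop phi 1 = pop psi 1.
    by rewrite (unit_vector_pop1 psi_unit) -t_mix (unit_vector_pop1 phi_unit); ring.
  rewrite big_bool; mx2_entries; rewrite ?entry_norm ?conjC0 ?mul0r ?mulr0 ?addr0 ?add0r //.
    by rewrite -mulrDl addrC t_mix divff.
  by rewrite -mulrDl t_mix1 divff.
have K_sign b : exists b' : bool, parity C *m K b *m parity C = (-1) ^+ b' *: K b.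
  exists b; apply/matrixP => i j; rewrite parity_conj_entry !mxE.
  by case: ((i != j) =P b) => [->|_]; rewrite ?mulr0.
have K_psi b : K b *m psi = mu b *: phi.
  by case: b; mx2_entries; rewrite ?mul0r ?add0r ?addr0 divfK.
exists (kraus K); split; first by apply: kraus_deterministic_Z2.
apply: (kraus_proj (mu := mu)) => //.
by rewrite big_bool /= -!normCK !mu_norm subrK.
Qed.

Lemma Z2_channel_of_pop_mul_le psi phi : unit_vector psi -> unit_vector phi ->
  pop phi 0 * pop phi 1 <= pop psi 0 * pop psi 1 ->
  exists E, deterministic_Z2_operation E /\ E (proj psi) = proj phi.
Proof.
move=> psi_unit phi_unit pop_le.
have [phi_incoherent|phi_coherent] := eqVneq (phi 0 0 * phi 1 0) 0.
  exact: replacement_Z2_channel.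
have : psi 0 0 * psi 1 0 != 0.
  apply: contraTneq pop_le => psi_incoherent.
  by rewrite /pop -!exprMn -!normrM psi_incoherent normr0 expr0n lt_geF // exprn_gt0 // normr_gt0.
rewrite mulf_eq0 negb_or => /andP[psi0 psi1].
have pop_real v b : pop v b \is Num.real by rewrite ger0_real ?exprn_ge0.
have [t t01 t_mix] : exists2 t, 0 <= t <= 1 & t * pop phi 0 + (1 - t) * pop phi 1 = pop psi 0.
  apply: real_convex_between; try exact: pop_real.
  suff -> : (pop psi 0 - pop phi 0) * (pop psi 0 - pop phi 1) =
      pop phi 0 * pop phi 1 - pop psi 0 * pop psi 1 by rewrite subr_le0.
  by rewrite !unit_vector_pop1 //; ring.
exact: coherent_Z2_channel t01 t_mix.
Qed.

End PureStates.

Theorem theorem10 (C : numClosedFieldType) (psi phi : 'cV[C]_2) :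
  unit_vector psi -> unit_vector phi ->
  (exists E : 'M[C]_2 -> 'M[C]_2,
      deterministic_Z2_operation E /\ E (proj psi) = proj phi)
  <-> coh phi <= coh psi.
Proof.
move=> psi_unit phi_unit; rewrite coh_leE //; split.
  by case=> E [E_op E_psi]; apply: Z2_channel_pop_mul_le E_psi.
exact: Z2_channel_of_pop_mul_le.
Qed.
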